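(* For every infinite discrete group $G$, the Bernoulli flow $2^G$ contains a free point whose orbit is dense.
   Context: The Bernoulli flow is $2^G=\{0,1\}^G$ with the product topology and the action $(g\cdot z)(h)=z(hg)$. A point $z$ is free if the map $g\mapsto g\cdot z$ is injective. *)

From Stdlib Require Import List.
Import ListNotations.

(* A group: carrier with multiplication, identity and inverse satisfying
   the group axioms. "Discrete" imposes nothing further. *)
Record Group := {
  carrier :> Type;
  gmul : carrier -> carrier -> carrier;
  gone : carrier;
  ginv : carrier -> carrier;
  gmul_assoc : forall a b c, gmul a (gmul b c) = gmul (gmul a b) c;
  gmul_1l : forall a, gmul gone a = a;
  gmul_1r : forall a, gmul a gone = a;
  gmul_Vl : forall a, gmul (ginv a) a = gone;
  gmul_Vr : forall a, gmul a (ginv a) = gone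
}.

Definition infinite_group (G : Group) : Prop :=
  ~ exists l : list G, forall g : G, In g l.

Definition bern (G : Group) := G -> bool.

Definition bact (G : Group) (g : G) (z : bern G) : bern G :=
  fun h => z (gmul G h g).

Definition free_point (G : Group) (z : bern G) : Prop :=
  forall g1 g2 : G, bact G g1 z = bact G g2 z -> g1 = g2.

(* Product topology on {0,1}^G: basic open cylinders around x
   determined by a finite set F of coordinates. *)
Definition cylinder (G : Group) (x : bern G) (F : list G) : bern G -> Prop :=
  fun y => forall h, In h F -> y h = x h.

Definition is_open (G : Group) (U : bern G -> Prop) : Prop :=
  forall x, U x -> exists F : list G, forall y, cylinder G x F y -> U y.

Definition dense_orbit (G : Group) (z : bern G) : Prop :=
  forall U : bern G -> Prop, is_open G U -> (exists x, U x) ->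
    exists g : G, U (bact G g z).

(* A point z is free with dense orbit as soon as, for every finite pattern b on F and
   every s <> 1, some translate realizes it: z (h k) = b h for h in F, resp.
   z k <> z (k s).  Since |G * G| = |G| for infinite G, there are only |G| such
   requirements; index them by G and treat them along a well-order of G all of whose
   proper initial segments are smaller than G.  At each stage fewer than |G| sites have
   been used, and the sites a requirement needs are finitely many injective functions
   of k, so some k puts all of them on fresh sites.  Colouring every site as its
   requirement asks gives z. *)

From Stdlib Require Import List Classical ClassicalEpsilon FunctionalExtensionality.
From Stdlib Require Import FinFun ProofIrrelevance Wellfounded Arith Lia.
From Stdlib Require Cantor.
From mathcomp Require eqtype boolp classical_sets wochoice.
Import ListNotations.
Set Bullet Behavior "Strict Subproofs".

(** * Cardinal comparison *)

Lemma zorn_premaximal (T : Type) (R : T -> T -> Prop) :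
  inhabited T ->
  (forall t, R t t) -> (forall r s t, R r s -> R s t -> R r t) ->
  (forall C : T -> Prop, (forall s t, C s -> C t -> R s t \/ R t s) ->
     exists t, forall s, C s -> R s t) ->
  exists t, forall s, R t s -> R s t.
Proof.
  intros [t0] Hrefl Htrans Hchain.
  assert (HR : forall s t, boolp.asbool (R s t) = true <-> R s t).
  { intros s t. split; [apply (ssrbool.elimT (boolp.asboolP _)) | apply boolp.asboolT]. }
  destruct (@classical_sets.ZL_preorder T t0 (fun s t => boolp.asbool (R s t))) as [m Hm].
  - intro t. apply HR, Hrefl.
  - intros r s t Hrs Hst. apply HR. apply HR in Hrs, Hst. eauto.
  - intros C HC. destruct (Hchain C) as [t Ht].
    + intros s u Cs Cu. destruct (HC s u Cs Cu); [left | right]; apply HR; assumption.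
    + exists t. intros s Cs. apply HR, Ht, Cs.
  - exists m. intros s Hms. apply HR, Hm, HR, Hms.
Qed.

Module WellOrdering.
Import eqtype boolp.

Lemma exists_well_order (T : Type) : exists lt : T -> T -> Prop,
  well_founded lt /\ (forall x y, x <> y -> lt x y \/ lt y x).
Proof.
  destruct (wochoice.well_ordering_principle (classicType T : eqtype.Equality.type)) as [R HR].
  assert (Hmin : forall P : T -> Prop, (exists x, P x) -> exists z, P z /\
      (forall x, P x -> R z x = true) /\
      forall z', P z' -> (forall x, P x -> R z' x = true) -> z = z').
  { intros P [x Px].
    destruct (HR (fun x => asbool (P x))) as [z [[Hz1 Hz2] U]].
    - exists x. exact (asboolT Px).
    - exists z. split; [|split].
      + exact (ssrbool.elimT (asboolP _) Hz1).
      + intros y Py. apply Hz2. exact (asboolT Py).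
      + intros z' Pz' Hz'. apply U. split; [exact (asboolT Pz') |].
        intros w Hw. apply Hz'. exact (ssrbool.elimT (asboolP _) Hw). }
  assert (Hrefl : forall x, R x x = true).
  { intro x. destruct (Hmin (fun w => w = x)) as [z [-> [Hl _]]]; [eauto | auto]. }
  assert (Hanti : forall x y, R x y = true -> R y x = true -> x = y).
  { intros x y Hxy Hyx.
    destruct (Hmin (fun w => w = x \/ w = y)) as [z [_ [_ U]]]; [eauto |].
    transitivity z; [symmetry |]; apply U; auto; intros w [-> | ->]; auto. }
  exists (fun x y => R x y = true /\ x <> y). split.
  - intro a. apply NNPP. intro Hna.
    destruct (Hmin (fun x => ~ Acc (fun x y => R x y = true /\ x <> y) x)) as [z [Hz [Hl _]]];
      [eauto |].
    apply Hz. constructor. intros y [Ryz Hne]. apply NNPP. intro Hy.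
    apply Hne, Hanti; auto.
  - intros x y Hxy.
    destruct (Hmin (fun w => w = x \/ w = y)) as [z [[-> | ->] [Hl _]]]; [eauto | left | right];
      split; auto.
Qed.

End WellOrdering.

Definition card_le (A B : Type) : Prop := exists f : A -> B, Injective f.

Definition finite_type (A : Type) : Prop := exists l : list A, forall x, In x l.

Lemma sig_ext (T : Type) (P : T -> Prop) (u v : sig P) : proj1_sig u = proj1_sig v -> u = v.
Proof. apply eq_sig_hprop. intros; apply proof_irrelevance. Qed.

Lemma card_le_refl (A : Type) : card_le A A.
Proof. exists (fun x => x). now intros x y. Qed.

Lemma card_le_trans (A B C : Type) : card_le A B -> card_le B C -> card_le A C.
Proof. intros [f Hf] [g Hg]. exists (fun x => g (f x)). intros x y E. auto. Qed.

Lemma card_le_prod (A A' B B' : Type) : card_le A A' -> card_le B B' -> card_le (A * B) (A' * B').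
Proof.
  intros [f Hf] [g Hg]. exists (fun p => (f (fst p), g (snd p))).
  intros [a b] [a' b'] E. injection E as Ea Eb. now rewrite (Hf _ _ Ea), (Hg _ _ Eb).
Qed.

Lemma card_le_list_map (A B : Type) : card_le A B -> card_le (list A) (list B).
Proof.
  intros [f Hf]. exists (map f). intros l. induction l as [|a l IH]; intros [|b l'] E;
    try discriminate; trivial.
  injection E as Eab El. now rewrite (Hf _ _ Eab), (IH _ El).
Qed.

Lemma finite_or_card_le_nat (X : Type) : finite_type X \/ card_le nat X.
Proof.
  destruct (classic (finite_type X)) as [Hfin | Hinf]; [now left | right].
  assert (Hfresh : forall l : list X, exists x, ~ In x l).
  { intro l. apply not_all_not_ex. intro Hall. apply Hinf. exists l. intro x. apply NNPP, Hall. }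
  destruct (choice _ Hfresh) as [fresh Hfresh_spec].
  pose (prefix := fix prefix n := match n with 0 => [] | S n => fresh (prefix n) :: prefix n end).
  assert (Hprefix : forall k n, k < n -> In (fresh (prefix k)) (prefix n)).
  { intros k n. induction n as [|n IH]; intro Hk; [lia |]. simpl.
    destruct (Nat.eq_dec k n) as [-> | Hne]; [now left | right; apply IH; lia]. }
  exists (fun n => fresh (prefix n)). intros m n E.
  destruct (Nat.lt_trichotomy m n) as [H | [H | H]]; trivial; exfalso.
  - apply (Hfresh_spec (prefix n)). rewrite <- E. now apply Hprefix.
  - apply (Hfresh_spec (prefix m)). rewrite E. now apply Hprefix.
Qed.

Lemma finite_of_injective_into_list (X Y : Type) (f : X -> Y) (l : list Y) :
  Injective f -> (forall x, In (f x) l) -> finite_type X.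
Proof.
  intros Hf Hl. destruct (classic (inhabited X)) as [[x0] | Hempty].
  - exists (map (fun y => epsilon (inhabits x0) (fun x => f x = y)) l). intro x.
    apply in_map_iff. exists (f x). split; [| apply Hl].
    apply Hf. apply (epsilon_spec (inhabits x0) (fun x' => f x' = f x)). now exists x.
  - exists []. intro x. apply Hempty. now constructor.
Qed.

Lemma chain_glue (T A B : Type) (b0 : B) (dom : T -> A -> Prop) (fn : T -> A -> B)
    (C : T -> Prop) :
  (forall o o' x, C o -> C o' -> dom o x -> dom o' x -> fn o x = fn o' x) ->
  exists f : A -> B, forall o x, C o -> dom o x -> f x = fn o x.
Proof.
  intros Hcompat.
  exists (fun x => epsilon (inhabits b0) (fun y => exists o, C o /\ dom o x /\ fn o x = y)).
  intros o x Co Dx.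
  destruct (epsilon_spec (inhabits b0) (fun y => exists o, C o /\ dom o x /\ fn o x = y))
    as [o' [Co' [Dx' <-]]]; [now exists (fn o x), o |].
  now apply Hcompat.
Qed.

Record partial_injection (A B : Type) := {
  pdom : A -> Prop;
  pfun : A -> B;
  pfun_inj : forall x y, pdom x -> pdom y -> pfun x = pfun y -> x = y }.
Arguments pdom {A B}.
Arguments pfun {A B}.
Arguments pfun_inj {A B}.

Definition pextends {A B : Type} (p q : partial_injection A B) : Prop :=
  (forall x, pdom p x -> pdom q x) /\ (forall x, pdom p x -> pfun q x = pfun p x).

Lemma partial_injection_maximal (A B : Type) (b0 : B) :
  exists m : partial_injection A B, forall q, pextends m q -> pextends q m.
Proof.
  apply zorn_premaximal.
  - constructor. exact {| pdom := fun _ => False; pfun := fun _ => b0;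
                          pfun_inj := fun _ _ F _ _ => False_ind _ F |}.
  - intro p. split; auto.
  - intros p q r [Hpq1 Hpq2] [Hqr1 Hqr2]. split; auto. intros x Hx. rewrite Hqr2; auto.
  - intros C HC.
    destruct (chain_glue _ _ _ b0 pdom pfun C) as [f Hf].
    { intros o o' x Co Co' Dx Dx'. destruct (HC o o' Co Co') as [[_ E] | [_ E]]; auto.
      symmetry; auto. }
    set (D := fun x => exists o, C o /\ pdom o x).
    assert (Hinj : forall x y, D x -> D y -> f x = f y -> x = y).
    { intros x y [o [Co Dx]] [o' [Co' Dy]] E.
      destruct (HC o o' Co Co') as [[Hdom _] | [Hdom _]].
      - rewrite (Hf o' x), (Hf o' y) in E; auto. apply (pfun_inj o'); auto.
      - rewrite (Hf o x), (Hf o y) in E; auto. apply (pfun_inj o); auto. }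
    exists {| pdom := D; pfun := f; pfun_inj := Hinj |}. intros o Co. split; simpl.
    + intros x Dx. now exists o.
    + intros x Dx. auto.
Qed.

Lemma card_le_total (A B : Type) : card_le A B \/ card_le B A.
Proof.
  destruct (classic (inhabited B)) as [[b0] | HB].
  2: { right. exists (fun b => False_rect A (HB (inhabits b))). intro b.
       exfalso. apply HB. now constructor. }
  destruct (partial_injection_maximal A B b0) as [m Hm].
  destruct (classic (forall x, pdom m x)) as [Htot | Hpart].
  { left. exists (pfun m). intros x y. apply pfun_inj; auto. }
  destruct (classic (forall y, exists x, pdom m x /\ pfun m x = y)) as [Hsurj | Hnsurj].
  { right. destruct (choice _ Hsurj) as [g Hg]. exists g. intros y y' E.
    rewrite <- (proj2 (Hg y)), <- (proj2 (Hg y')), E. reflexivity. }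
  exfalso.
  apply not_all_ex_not in Hpart. destruct Hpart as [a Ha].
  apply not_all_ex_not in Hnsurj. destruct Hnsurj as [b Hb].
  pose (f x := if excluded_middle_informative (x = a) then b else pfun m x).
  assert (Hinj : forall x y, pdom m x \/ x = a -> pdom m y \/ y = a -> f x = f y -> x = y).
  { unfold f. intros x y Hx Hy E.
    destruct (excluded_middle_informative (x = a)), (excluded_middle_informative (y = a));
      try congruence.
    - destruct Hy as [Hy | Hy]; [| contradiction]. exfalso. apply Hb. now exists y.
    - destruct Hx as [Hx | Hx]; [| contradiction]. exfalso. apply Hb. now exists x.
    - destruct Hx as [Hx | Hx], Hy as [Hy | Hy]; try contradiction. now apply (pfun_inj m). }
  destruct (Hm {| pdom := fun x => pdom m x \/ x = a; pfun := f; pfun_inj := Hinj |})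
    as [Hdom _].
  - split; simpl; [now left |]. intros x Hx. unfold f.
    destruct (excluded_middle_informative (x = a)) as [-> |]; tauto.
  - apply Ha, Hdom. now right.
Qed.

Lemma restrict_sig_injection (X : Type) (D E : X -> Prop) (k : {x | D x} -> {x | E x}) :
  Injective k -> exists k' : X -> X,
    (forall a, D a -> E (k' a)) /\ (forall a b, D a -> D b -> k' a = k' b -> a = b).
Proof.
  intro Hk.
  exists (fun x => match excluded_middle_informative (D x) with
                   | left H => proj1_sig (k (exist _ x H)) | right _ => x end).
  split.
  - intros a Ha. destruct (excluded_middle_informative (D a)); [apply proj2_sig | contradiction].
  - intros a b Ha Hb Heq.
    destruct (excluded_middle_informative (D a)), (excluded_middle_informative (D b));
      try contradiction.
    apply sig_ext, Hk in Heq. exact (f_equal (@proj1_sig _ _) Heq).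
Qed.

Section SquareCode.
Variables (X : Type) (e : nat -> X).
Hypothesis e_inj : Injective e.

Record square_code := {
  sdom : X -> Prop;
  spair : X -> X -> X;
  sdom_nat : forall n, sdom (e n);
  spair_closed : forall a b, sdom a -> sdom b -> sdom (spair a b);
  spair_inj : forall a b c d, sdom a -> sdom b -> sdom c -> sdom d ->
    spair a b = spair c d -> a = c /\ b = d }.

Definition code_extends (o o' : square_code) : Prop :=
  (forall x, sdom o x -> sdom o' x) /\
  (forall a b, sdom o a -> sdom o b -> spair o' a b = spair o a b).

Lemma square_code_nat : inhabited square_code.
Proof.
  destruct (choice (fun (x : X) (n : nat) => forall m, e m = x -> n = m)) as [inv Hinv].
  { intro x. destruct (classic (exists n, e n = x)) as [[n <-] | Hno].
    - exists n. intros m E. now apply e_inj.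
    - exists 0. intros m E. exfalso. apply Hno. now exists m. }
  constructor. refine {| sdom := fun x => exists n, e n = x;
            spair := fun a b => e (Cantor.to_nat (inv a, inv b)) |}.
  - intro n. now exists n.
  - intros a b _ _. eexists; reflexivity.
  - intros a b c d [n1 <-] [n2 <-] [n3 <-] [n4 <-] E.
    apply e_inj, Cantor.to_nat_inj in E.
    assert (Hinv' : forall n, inv (e n) = n) by (intro n; now apply Hinv).
    rewrite !Hinv' in E.
    injection E as -> ->. auto.
Qed.

Lemma square_code_maximal : exists m, forall o, code_extends m o -> code_extends o m.
Proof.
  apply zorn_premaximal; [exact square_code_nat | | |].
  - intro o. split; auto.
  - intros r s t [H1 H2] [H3 H4]. split; auto. intros a b Ha Hb. rewrite H4; auto.
  - intros C HC.
    destruct (classic (exists o, C o)) as [[o0 Co0] | Hempty].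
    2: { destruct square_code_nat as [o0]. exists o0. intros o Co. exfalso. apply Hempty.
         now exists o. }
    destruct (chain_glue _ _ _ (e 0) (fun o ab => sdom o (fst ab) /\ sdom o (snd ab))
                (fun o ab => spair o (fst ab) (snd ab)) C) as [f Hf].
    { intros o o' [a b] Co Co' [Ha Hb] [Ha' Hb']. simpl in *.
      destruct (HC o o' Co Co') as [[_ E] | [_ E]]; auto. symmetry; auto. }
    set (D := fun x => exists o, C o /\ sdom o x).
    assert (Hcommon : forall a b, D a -> D b -> exists o, C o /\ sdom o a /\ sdom o b).
    { intros a b [o [Co Ha]] [o' [Co' Hb]].
      destruct (HC o o' Co Co') as [[Hdom _] | [Hdom _]]; [exists o' | exists o]; auto. }
    assert (Hf' : forall o a b, C o -> sdom o a -> sdom o b -> f (a, b) = spair o a b).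
    { intros o a b Co Ha Hb. apply (Hf o (a, b)); auto. }
    assert (Hnat : forall n, D (e n)) by (intro n; exists o0; split; auto; apply sdom_nat).
    assert (Hclosed : forall a b, D a -> D b -> D (f (a, b))).
    { intros a b Ha Hb. destruct (Hcommon a b Ha Hb) as [o [Co [Ha' Hb']]].
      rewrite (Hf' o); auto. exists o. split; auto. now apply spair_closed. }
    assert (Hinj : forall a b c d, D a -> D b -> D c -> D d ->
                   f (a, b) = f (c, d) -> a = c /\ b = d).
    { intros a b c d Ha Hb Hc Hd E.
      destruct (Hcommon a b Ha Hb) as [o [Co [Ha' Hb']]].
      destruct (Hcommon c d Hc Hd) as [o' [Co' [Hc' Hd']]].
      rewrite (Hf' o), (Hf' o') in E; auto.
      destruct (HC o o' Co Co') as [[Hdom _] | [Hdom _]].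
      - apply (spair_inj o'); auto. rewrite <- (Hf' o' a b), (Hf' o a b); auto.
      - apply (spair_inj o); auto. rewrite <- (Hf' o c d), (Hf' o' c d); auto. }
    exists {| sdom := D; spair := fun a b => f (a, b); sdom_nat := Hnat;
              spair_closed := Hclosed; spair_inj := Hinj |}.
    intros o Co. split; simpl.
    + intros x Hx. now exists o.
    + intros a b Ha Hb. now apply Hf'.
Qed.

Lemma square_code_grow (o : square_code) (k : X -> X) :
  (forall a, sdom o a -> ~ sdom o (k a)) ->
  (forall a b, sdom o a -> sdom o b -> k a = k b -> a = b) ->
  exists o', code_extends o o' /\ ~ code_extends o' o.
Proof.
  intros Hk_out Hk_inj.
  set (D := sdom o). set (p := spair o).
  set (D' := fun u => D u \/ exists a, D a /\ k a = u).
  (* a point of [D'] is coded in [D] by its side (a tag) and its preimage in [D] *)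
  set (tag := fun u => if excluded_middle_informative (D u) then 0 else 1).
  set (base := fun u => if excluded_middle_informative (D u) then u
                        else epsilon (inhabits (e 0)) (fun a => D a /\ k a = u)).
  assert (Hbase : forall u, D' u ->
            D (base u) /\ ((D u /\ base u = u) \/ (~ D u /\ k (base u) = u))).
  { intros u Hu. unfold base. destruct (excluded_middle_informative (D u)) as [Du | Du]; auto.
    destruct Hu as [Hu | Hu]; [contradiction |].
    destruct (epsilon_spec (inhabits (e 0)) (fun a => D a /\ k a = u) Hu). auto. }
  set (code := fun u => p (e (tag u)) (base u)).
  assert (Hcode_in : forall u, D' u -> D (code u)).
  { intros u Hu. apply spair_closed; [apply sdom_nat | apply Hbase, Hu]. }
  assert (Hcode_inj : forall u v, D' u -> D' v -> code u = code v -> u = v).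
  { intros u v Hu Hv E. apply spair_inj in E; try apply sdom_nat; try apply Hbase; auto.
    destruct E as [Etag Ebase]. apply e_inj in Etag. unfold tag in Etag.
    destruct (Hbase u Hu) as [_ [[Du Bu] | [Du Bu]]], (Hbase v Hv) as [_ [[Dv Bv] | [Dv Bv]]];
      destruct (excluded_middle_informative (D u)), (excluded_middle_informative (D v));
      try contradiction; try discriminate; congruence. }
  set (p' := fun a b => if excluded_middle_informative (D a /\ D b) then p a b
                        else k (p (code a) (code b))).
  assert (Hnat : forall n, D' (e n)) by (intro n; left; apply sdom_nat).
  assert (Hclosed : forall a b, D' a -> D' b -> D' (p' a b)).
  { intros a b Ha Hb. unfold p'. destruct (excluded_middle_informative (D a /\ D b)) as [[]|].
    - left. now apply spair_closed.
    - right. exists (p (code a) (code b)). split; auto. apply spair_closed; apply Hcode_in; auto. }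
  assert (Hinj : forall a b c d, D' a -> D' b -> D' c -> D' d ->
                 p' a b = p' c d -> a = c /\ b = d).
  { intros a b c d Ha Hb Hc Hd. unfold p'.
    destruct (excluded_middle_informative (D a /\ D b)) as [[]|];
      destruct (excluded_middle_informative (D c /\ D d)) as [[]|]; intro E.
    - now apply spair_inj in E.
    - exfalso. apply (Hk_out (p (code c) (code d))); [apply spair_closed; apply Hcode_in; auto |].
      rewrite <- E. now apply spair_closed.
    - exfalso. apply (Hk_out (p (code a) (code b))); [apply spair_closed; apply Hcode_in; auto |].
      rewrite E. now apply spair_closed.
    - assert (Hcodes : code a = code c /\ code b = code d).
      { apply (spair_inj o); try apply Hcode_in; auto.
        apply Hk_inj; auto; apply spair_closed; apply Hcode_in; auto. }
      destruct Hcodes as [Eac Ebd]. split; now apply Hcode_inj. }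
  exists {| sdom := D'; spair := p'; sdom_nat := Hnat; spair_closed := Hclosed;
            spair_inj := Hinj |}.
  split.
  - split; simpl; [now left |]. intros a b Ha Hb. unfold p'.
    destruct (excluded_middle_informative (D a /\ D b)); tauto.
  - intros [Hsub _]. apply (Hk_out (e 0)); [apply sdom_nat |]. apply Hsub. simpl.
    right. exists (e 0). split; auto. apply sdom_nat.
Qed.

Lemma card_le_square_of_code : card_le (X * X) X.
Proof.
  destruct square_code_maximal as [m Hm].
  set (D := sdom m). set (p := spair m).
  destruct (card_le_total {x | ~ D x} {x | D x}) as [[k Hk] | [k Hk]].
  - destruct (restrict_sig_injection X _ _ k Hk) as [k' [Hk'_in Hk'_inj]].
    set (h := fun x => if excluded_middle_informative (D x) then p x (e 0) else p (k' x) (e 1)).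
    assert (Hh_in : forall x, D (h x)).
    { intro x. unfold h. destruct (excluded_middle_informative (D x));
        apply spair_closed; first [assumption | apply sdom_nat | now apply Hk'_in]. }
    assert (Hh_inj : Injective h).
    { intros x y. unfold h.
      pose proof (sdom_nat m 0) as D0. pose proof (sdom_nat m 1) as D1.
      destruct (excluded_middle_informative (D x)) as [Dx | Dx],
               (excluded_middle_informative (D y)) as [Dy | Dy]; intro E.
      - now apply (spair_inj m) in E.
      - apply (spair_inj m) in E; auto; try now apply Hk'_in.
        destruct E as [_ E]. now apply e_inj in E.
      - apply (spair_inj m) in E; auto; try now apply Hk'_in.
        destruct E as [_ E]. now apply e_inj in E.
      - apply (spair_inj m) in E; auto; try now apply Hk'_in.
        destruct E as [E _]. now apply Hk'_inj. }
    exists (fun xy => p (h (fst xy)) (h (snd xy))). intros [a b] [c d] E. simpl in E.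
    apply (spair_inj m) in E; try apply Hh_in. destruct E as [Ea Eb].
    now rewrite (Hh_inj _ _ Ea), (Hh_inj _ _ Eb).
  - exfalso. destruct (restrict_sig_injection X _ _ k Hk) as [k' [Hk'_out Hk'_inj]].
    destruct (square_code_grow m k' Hk'_out Hk'_inj) as [o' [Hext Hnot]].
    exact (Hnot (Hm o' Hext)).
Qed.

End SquareCode.

Lemma card_le_square (X : Type) : card_le nat X -> card_le (X * X) X.
Proof. intros [e He]. exact (card_le_square_of_code X e He). Qed.

Lemma card_le_prod_nat (X : Type) : card_le nat X -> card_le (X * nat) X.
Proof.
  intro HX. apply card_le_trans with (X * X)%type.
  - apply card_le_prod; [apply card_le_refl | exact HX].
  - now apply card_le_square.
Qed.

Lemma card_le_list (X : Type) : card_le nat X -> card_le (list X) X.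
Proof.
  intro HX. destruct (card_le_square X HX) as [p Hp]. destruct HX as [e He].
  pose (fold := fix fold (l : list X) : X := match l with [] => e 0 | a :: l => p (a, fold l) end).
  apply card_le_trans with (X * nat)%type; [| apply card_le_prod_nat; now exists e].
  exists (fun l => (fold l, length l)).
  intros l. induction l as [|a l IH]; intros [|b l'] E; try discriminate; trivial.
  injection E as Efold Elen. apply Hp in Efold. injection Efold as -> Efold.
  f_equal. apply IH. simpl. congruence.
Qed.

Lemma card_le_sum (A B X : Type) :
  card_le nat X -> card_le A X -> card_le B X -> card_le (A + B) X.
Proof.
  intros HX [fa Ha] [fb Hb]. apply card_le_trans with (X * X)%type; [| now apply card_le_square].
  destruct HX as [e He].
  exists (fun s => match s with inl a => (e 0, fa a) | inr b => (e 1, fb b) end).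
  intros [a | b] [a' | b'] E; pose proof (f_equal fst E) as E1; pose proof (f_equal snd E) as E2;
    simpl in E1, E2; try (apply He in E1; discriminate); f_equal; auto.
Qed.

Lemma wf_minimal (T : Type) (lt : T -> T -> Prop) (P : T -> Prop) :
  well_founded lt -> (exists x, P x) -> exists x, P x /\ forall y, lt y x -> ~ P y.
Proof.
  intros Hwf [x Px]. revert Px. induction (Hwf x) as [x _ IH]. intro Px.
  destruct (classic (exists y, lt y x /\ P y)) as [[y [Hy Py]] | Hno].
  - exact (IH y Hy Py).
  - exists x. split; [exact Px |]. intros y Hy Py. apply Hno. now exists y.
Qed.

Lemma initial_well_order (X : Type) : exists lt : X -> X -> Prop,
  well_founded lt /\ (forall x y, x <> y -> lt x y \/ lt y x) /\
  (forall x, ~ card_le X {y | lt y x}).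
Proof.
  destruct (WellOrdering.exists_well_order X) as [lt [Hwf Htot]].
  destruct (classic (exists a, card_le X {y | lt y a})) as [Hex | Hno].
  2: { exists lt. split; [| split]; auto. intros x Hx. apply Hno. now exists x. }
  (* pull the order back along an embedding of X into the least initial segment as large as X *)
  destruct (wf_minimal _ lt _ Hwf Hex) as [a [[j Hj] Hmin]].
  exists (fun x y => lt (proj1_sig (j x)) (proj1_sig (j y))). split; [| split].
  - apply wf_inverse_image, Hwf.
  - intros x y Hxy. apply Htot. intro E. apply Hxy, Hj, sig_ext, E.
  - intros x [k Hk]. apply (Hmin (proj1_sig (j x)) (proj2_sig (j x))).
    exists (fun g => exist (fun w => lt w (proj1_sig (j x)))
                   (proj1_sig (j (proj1_sig (k g)))) (proj2_sig (k g))).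
    intros g g' E. apply Hk, sig_ext, Hj, sig_ext. exact (f_equal (@proj1_sig _ _) E).
Qed.

(** * Realizing finite patterns *)

Lemma no_bounded_injection (X S : Type) (n : S -> nat) (h : X -> S * nat) :
  ~ finite_type X -> ~ card_le X S -> Injective h ->
  (forall x, snd (h x) < n (fst (h x))) -> False.
Proof.
  intros HX HXS Hh Hbound.
  destruct (finite_or_card_le_nat S) as [[l Hl] | HS].
  - apply HX. apply (finite_of_injective_into_list _ _ h
                       (flat_map (fun s => map (pair s) (seq 0 (n s))) l) Hh).
    intro x. apply in_flat_map. exists (fst (h x)). split; [apply Hl |].
    apply in_map_iff. exists (snd (h x)). split; [now destruct (h x) |].
    apply in_seq. specialize (Hbound x). lia.
  - apply HXS. apply card_le_trans with (S * nat)%type; [now exists h | now apply card_le_prod_nat].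
Qed.

Lemma exists_avoiding (X : Type) (U : X -> Prop) (fs : list (X -> X)) :
  ~ finite_type X -> ~ card_le X {p | U p} -> (forall f, In f fs -> Injective f) ->
  exists g, forall f, In f fs -> ~ U (f g).
Proof.
  intros HX HU Hfs. apply NNPP. intro Hno.
  assert (Hbad : forall g, exists q : {p | U p} * nat,
             snd q < length fs /\ proj1_sig (fst q) = nth (snd q) fs (fun x => x) g).
  { intro g. apply NNPP. intro Hg. apply Hno. exists g. intros f Hf Uf.
    destruct (In_nth _ _ (fun x => x) Hf) as [i [Hi <-]]. apply Hg. now exists (exist _ _ Uf, i). }
  destruct (choice _ Hbad) as [h Hh].
  apply (no_bounded_injection X {p | U p} (fun _ => length fs) h HX HU).
  - intros g g' E. destruct (Hh g) as [Hi Eg], (Hh g') as [_ Eg']. rewrite E in Hi, Eg.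
    apply (Hfs _ (nth_In _ (fun x => x) Hi)). now rewrite <- Eg, Eg'.
  - intro g. apply Hh.
Qed.

Definition pattern (X : Type) : Type := list ((X -> X) * bool).

Definition consistent {X : Type} (p : pattern X) : Prop :=
  forall f b f' b' g, In (f, b) p -> In (f', b') p -> f g = f' g -> b = b'.

Definition realized {X : Type} (z : X -> bool) (p : pattern X) : Prop :=
  exists g, forall f b, In (f, b) p -> z (f g) = b.

Section Realization.
Variables (X : Type) (lt : X -> X -> Prop) (pats : X -> pattern X).
Hypothesis X_infinite : ~ finite_type X.
Hypothesis lt_wf : well_founded lt.
Hypothesis lt_total : forall x y, x <> y -> lt x y \/ lt y x.
Hypothesis lt_initial : forall x, ~ card_le X {y | lt y x}.
Hypothesis pats_injective : forall x f b, In (f, b) (pats x) -> Injective f.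

Definition used_before (x : X) (prev : forall y, lt y x -> X) (p : X) : Prop :=
  exists y (Hy : lt y x) f b, In (f, b) (pats y) /\ f (prev y Hy) = p.

Lemma used_before_small x prev : ~ card_le X {p | used_before x prev p}.
Proof.
  intros [k Hk].
  assert (Hsrc : forall q : {p | used_before x prev p}, exists yj : {y | lt y x} * nat,
             snd yj < length (pats (proj1_sig (fst yj))) /\
             fst (nth (snd yj) (pats (proj1_sig (fst yj))) (fun g => g, false))
                 (prev _ (proj2_sig (fst yj))) = proj1_sig q).
  { intros [p [y [Hy [f [b [Hin <-]]]]]].
    destruct (In_nth _ _ (fun g => g, false) Hin) as [j [Hj Ej]].
    exists (exist _ y Hy, j). simpl. rewrite Ej. auto. }
  destruct (choice _ Hsrc) as [src Hsrc'].
  apply (no_bounded_injection X {y | lt y x} (fun y => length (pats (proj1_sig y)))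
           (fun g => src (k g)) X_infinite (lt_initial x)).
  - intros g g' E. apply Hk, sig_ext.
    rewrite <- (proj2 (Hsrc' (k g))), <- (proj2 (Hsrc' (k g'))), E. reflexivity.
  - intro g. apply Hsrc'.
Qed.

Definition avoids (x : X) (prev : forall y, lt y x -> X) (g : X) : Prop :=
  forall f b, In (f, b) (pats x) -> ~ used_before x prev (f g).

Lemma avoids_exists x prev : exists g, avoids x prev g.
Proof.
  destruct (exists_avoiding X (used_before x prev) (map fst (pats x)) X_infinite
              (used_before_small x prev)) as [g Hg].
  - intros f Hf. apply in_map_iff in Hf. destruct Hf as [[f' b] [<- Hin]].
    exact (pats_injective x f' b Hin).
  - exists g. intros f b Hin. apply Hg. apply in_map_iff. now exists (f, b).
Qed.

Lemma X_inhabited : inhabited X.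
Proof. apply NNPP. intro H. apply X_infinite. exists []. intro x. apply H. now constructor. Qed.

Definition placement_step (x : X) (prev : forall y, lt y x -> X) : X :=
  epsilon X_inhabited (avoids x prev).

Definition placement : X -> X := Fix lt_wf (fun _ => X) placement_step.

Lemma placement_avoids x : avoids x (fun y _ => placement y) (placement x).
Proof.
  assert (Hfix : placement x = placement_step x (fun y _ => placement y)).
  { apply (Fix_eq lt_wf (fun _ => X) placement_step). intros x' prev prev' Hprev.
    replace prev' with prev; [reflexivity |].
    apply functional_extensionality_dep. intro y.
    apply functional_extensionality_dep. intro Hy. apply Hprev. }
  rewrite Hfix. unfold placement_step. apply epsilon_spec, avoids_exists.
Qed.

Lemma placements_disjoint x x' f b f' b' :
  lt x' x -> In (f, b) (pats x) -> In (f', b') (pats x') ->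
  f (placement x) <> f' (placement x').
Proof.
  intros Hlt Hin Hin' E. apply (placement_avoids x f b Hin). now exists x', Hlt, f', b'.
Qed.

Definition colouring (p : X) : bool :=
  if excluded_middle_informative
       (exists x f, In (f, true) (pats x) /\ f (placement x) = p) then true else false.

Lemma colouring_realizes x : consistent (pats x) -> realized colouring (pats x).
Proof.
  intros Hcons. exists (placement x). intros f b Hin. unfold colouring.
  destruct (excluded_middle_informative _) as [[x' [f' [Hin' E]]] | Hno].
  - destruct (classic (x' = x)) as [-> | Hne].
    + symmetry. exact (Hcons f b f' true (placement x) Hin Hin' (eq_sym E)).
    + exfalso. destruct (lt_total x' x Hne) as [Hlt | Hlt].
      * exact (placements_disjoint x x' f b f' true Hlt Hin Hin' (eq_sym E)).
      * exact (placements_disjoint x' x f' true f b Hlt Hin' Hin E).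
  - destruct b; [| reflexivity]. exfalso. apply Hno. now exists x, f.
Qed.

End Realization.

Theorem realize_patterns (X I : Type) (pats : I -> pattern X) :
  ~ finite_type X -> card_le I X -> (forall i f b, In (f, b) (pats i) -> Injective f) ->
  exists z : X -> bool, forall i, consistent (pats i) -> realized z (pats i).
Proof.
  intros HX [e He] Hinj.
  destruct (initial_well_order X) as [lt [Hwf [Htot Hinit]]].
  destruct (choice (fun (x : X) (o : option I) => forall i, e i = x -> o = Some i))
    as [pre Hpre].
  { intro x. destruct (classic (exists i, e i = x)) as [[i <-] | Hno].
    - exists (Some i). intros i' E. f_equal. now apply He.
    - exists None. intros i E. exfalso. apply Hno. now exists i. }
  set (pats' x := match pre x with Some i => pats i | None => [] end).
  assert (Hpats' : forall i, pats' (e i) = pats i).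
  { intro i. unfold pats'. now rewrite (Hpre (e i) i eq_refl). }
  assert (Hinj' : forall x f b, In (f, b) (pats' x) -> Injective f).
  { intros x f b. unfold pats'. destruct (pre x); [apply Hinj | contradiction]. }
  exists (colouring X lt pats' HX Hwf). intros i Hcons. rewrite <- Hpats'.
  apply colouring_realizes; auto. now rewrite Hpats'.
Qed.

(** * The Bernoulli flow *)

Section BernoulliFlow.
Variable G : Group.

Lemma gmul_cancel_l (a b c : G) : gmul G a b = gmul G a c -> b = c.
Proof.
  intro E. rewrite <- (gmul_1l G b), <- (gmul_1l G c), <- (gmul_Vl G a), <- !gmul_assoc, E.
  reflexivity.
Qed.

Lemma gmul_cancel_r (a b c : G) : gmul G b a = gmul G c a -> b = c.
Proof.
  intro E. rewrite <- (gmul_1r G b), <- (gmul_1r G c), <- (gmul_Vr G a), !gmul_assoc, E.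
  reflexivity.
Qed.

(* [g1 . z = g2 . z] evaluated at [k g1^-1] reads [z k = z (k g1^-1 g2)] *)
Lemma free_point_of_separating (z : bern G) :
  (forall s, s <> gone G -> exists k, z k <> z (gmul G k s)) -> free_point G z.
Proof.
  intros Hsep g1 g2 E. apply NNPP. intro Hne.
  destruct (Hsep (gmul G (ginv G g1) g2)) as [k Hk].
  - intro Hs. apply Hne.
    rewrite <- (gmul_1r G g1), <- Hs, gmul_assoc, gmul_Vr, gmul_1l. reflexivity.
  - apply Hk. pose proof (f_equal (fun y => y (gmul G k (ginv G g1))) E) as Ek.
    unfold bact in Ek. rewrite <- !gmul_assoc, gmul_Vl, gmul_1r in Ek. exact Ek.
Qed.

Lemma dense_orbit_of_cylinders (z : bern G) :
  (forall x F, exists g, cylinder G x F (bact G g z)) -> dense_orbit G z.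
Proof.
  intros Hcyl U HU [x Ux]. destruct (HU x Ux) as [F HF]. destruct (Hcyl x F) as [g Hg].
  exists g. now apply HF.
Qed.

(* [inl l] asks for a right translate of the finite pattern [l]; [inr s] asks for a
   point [k] where [z k] and [z (k s)] differ *)
Definition requirement : Type := (list (G * bool) + G)%type.

Definition requirement_pattern (r : requirement) : pattern G :=
  match r with
  | inl l => map (fun hb => (gmul G (fst hb), snd hb)) l
  | inr s => [(fun g => g, true); (fun g => gmul G g s, false)]
  end.

Lemma requirement_pattern_injective r f b :
  In (f, b) (requirement_pattern r) -> Injective f.
Proof.
  destruct r as [l | s]; simpl; intro Hin.
  - apply in_map_iff in Hin. destruct Hin as [[h b'] [E _]]. injection E as <- _.
    intros x y. apply gmul_cancel_l.
  - destruct Hin as [E | [E | []]]; injection E as <- _; intros x y;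
      [trivial | apply gmul_cancel_r].
Qed.

Lemma cylinder_pattern_consistent (x : bern G) (F : list G) :
  consistent (requirement_pattern (inl (map (fun h => (h, x h)) F))).
Proof.
  intros f b f' b' g Hin Hin' E. simpl in Hin, Hin'. rewrite map_map in Hin, Hin'.
  apply in_map_iff in Hin, Hin'.
  destruct Hin as [h [Eh _]], Hin' as [h' [Eh' _]]. injection Eh as <- <-. injection Eh' as <- <-.
  apply gmul_cancel_r in E. now rewrite E.
Qed.

Lemma separation_pattern_consistent (s : G) :
  s <> gone G -> consistent (requirement_pattern (inr s)).
Proof.
  intros Hs f b f' b' g Hin Hin' E. simpl in Hin, Hin'.
  destruct Hin as [Hin | [Hin | []]], Hin' as [Hin' | [Hin' | []]];
    injection Hin as <- <-; injection Hin' as <- <-; trivial;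
    exfalso; apply Hs, (gmul_cancel_l g); rewrite gmul_1r; first [exact E | exact (eq_sym E)].
Qed.

Lemma card_le_requirement : ~ finite_type G -> card_le requirement G.
Proof.
  intro HG. destruct (finite_or_card_le_nat G) as [| HnatG]; [contradiction |].
  apply card_le_sum; [exact HnatG | | apply card_le_refl].
  apply card_le_trans with (list G); [apply card_le_list_map | now apply card_le_list].
  apply card_le_trans with (G * G)%type; [| now apply card_le_square].
  apply card_le_prod; [apply card_le_refl |].
  apply card_le_trans with nat; [| exact HnatG].
  exists (fun b : bool => if b then 1 else 0). now intros [] [].
Qed.

End BernoulliFlow.

Theorem lemma2p3 (G : Group) (HG : infinite_group G) :
  exists z : bern G, free_point G z /\ dense_orbit G z.
Proof.
  destruct (realize_patterns G (requirement G) (requirement_pattern G) HG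
              (card_le_requirement G HG) (requirement_pattern_injective G)) as [z Hz].
  exists z. split.
  - apply free_point_of_separating. intros s Hs.
    destruct (Hz (inr s) (separation_pattern_consistent G s Hs)) as [k Hk].
    assert (Hk1 : z k = true) by (apply (Hk (fun g => g)); simpl; tauto).
    assert (Hks : z (gmul G k s) = false) by (apply (Hk (fun g => gmul G g s)); simpl; tauto).
    exists k. congruence.
  - apply dense_orbit_of_cylinders. intros x F.
    destruct (Hz _ (cylinder_pattern_consistent G x F)) as [k Hk].
    exists k. intros h Hh. apply (Hk (gmul G h)). simpl. rewrite map_map.
    apply in_map_iff. now exists h.
Qed.
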